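(* Assume the setting below, and let $\gamma=\sup_{W_1\in V_{1,H},W_2\in V_{2,H}}\frac{(T_1W_1,T_2W_2)}{\|T_1W_1\|\,\|T_2W_2\|}$ (with $\|\cdot\|$ the $L^2(\Omega)$ norm), assumed to lie in $(0,1)$. If $$\tau^2\le 2(1-\gamma^2)\inf_{W\in V_{2,H}}\frac{\|W\|_{m_{22}}^2}{\|W\|_{a_{22}}^2+\|W\|_{c_{22}}^2},$$ then discretization scheme 2 is stable, i.e. it admits a discrete energy that is conserved from one time step to the next and is nonnegative.
   Context: Let $\Omega\subset\mathbb{R}^d$ be bounded, $\kappa>0$ a coefficient, $a(u,v)=\int_\Omega\kappa\nabla u\cdot\nabla v$, and $(\cdot,\cdot)$ the $L^2(\Omega)$ inner product. $V_{1,H},V_{2,H}$ are finite-dimensional spaces (in the paper $V_{j,H}=\prod_{k\in I_j}V_H$ for a coarse finite element space $V_H$ and a partition $I_1\sqcup I_2$ of the continua indices), with linear maps $T_{j,0},T_{j,1}$ on $V_{j,H}$ and $T_j=T_{j,0}+T_{j,1}$ (in the paper, $T_{j,0}U=\sum_K\mathbf{1}_K\sum_{k\in I_j}\phi_k^KU_k$, $T_{j,1}U=\sum_K\mathbf{1}_K\sum_{k\in I_j}\sum_m\phi_k^{K,m}\partial_{x_m}U_k$ with fixed multiscale basis functions). Bilinear forms: $m_{ij}(U,W)=(T_jU,T_iW)$, $a_{ij}(U,W)=a(T_{j,1}U,T_{i,1}W)$, $c_{ij}(U,W)=a(T_{j,0}U,T_{i,0}W)$ for $U\in V_{j,H},W\in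 V_{i,H}$; $\|W\|_{x_{22}}^2=x_{22}(W,W)$ for $x\in\{m,a,c\}$. Discretization scheme 2 (with zero source, as assumed in the paper's stability analysis), time step $\tau>0$: for $n\ge1$, for all $W_1\in V_{1,H}$, $\tfrac{1}{\tau^2} m_{11}(U_1^{n+1}-2U_1^n+U_1^{n-1},W_1)+\tfrac{1}{\tau^2} m_{12}(U_2^{n+1}-2U_2^n+U_2^{n-1},W_1)+\tfrac12 a_{11}(U_1^{n+1}+U_1^{n-1},W_1)+a_{12}(U_2^n,W_1)+\tfrac12 c_{11}(U_1^{n+1}+U_1^{n-1},W_1)+c_{12}(U_2^n,W_1)=0$, and for all $W_2\in V_{2,H}$, $\tfrac{1}{\tau^2} m_{22}(U_2^{n+1}-2U_2^n+U_2^{n-1},W_2)+\tfrac{1}{\tau^2} m_{21}(U_1^{n+1}-2U_1^n+U_1^{n-1},W_2)+a_{21}(U_1^n,W_2)+a_{22}(U_2^n,W_2)+c_{21}(U_1^n,W_2)+c_{22}(U_2^n,W_2)=0$. The infimum is over nonzero $W$. *)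

From HB Require Import structures.
From mathcomp Require Import all_boot all_order all_algebra.
From mathcomp Require Import all_classical all_reals.
Set Implicit Arguments. Unset Strict Implicit. Unset Printing Implicit Defensive.
Import Order.TTheory GRing.Theory Num.Theory.
Local Open Scope ring_scope.
Local Open Scope classical_set_scope.

(* The abstract setting.
   [H]   : ambient real function space (L^2(Omega) / H^1(Omega) in the paper),
   [ip]  : the L^2 inner product ( . , . ),
   [a]   : the energy form a(u,v) = int kappa grad u . grad v,
   [Vj]  : the finite-dimensional coarse spaces V_{j,H},
   [Tj0], [Tj1] : the linear maps T_{j,0}, T_{j,1} : V_{j,H} -> H. *)

Definition inner_product (R : realType) (H : lmodType R) (ip : H -> H -> R) : Prop :=
  (forall u v, ip u v = ip v u) /\
  (forall (k : R) u v w, ip (k *: u + v) w = k * ip u w + ip v w) /\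
  (forall u, 0 <= ip u u) /\
  (forall u, ip u u = 0 -> u = 0).

Definition energy_form (R : realType) (H : lmodType R) (a : H -> H -> R) : Prop :=
  (forall u v, a u v = a v u) /\
  (forall (k : R) u v w, a (k *: u + v) w = k * a u w + a v w) /\
  (forall u, 0 <= a u u).

Definition l2norm (R : realType) (H : lmodType R) (ip : H -> H -> R) (u : H) : R :=
  Num.sqrt (ip u u).

Definition Tsum (R : realType) (H V : lmodType R) (T0 T1 : V -> H) (U : V) : H :=
  T0 U + T1 U.

(* Generic block form  b_{ij}(U, W) = b (Tj U) (Ti W),  U in V_j, W in V_i.
   m_ij = bform ip Tj Ti ;  a_ij = bform a Tj1 Ti1 ;  c_ij = bform a Tj0 Ti0. *)
Definition bform (R : realType) (H Vj Vi : lmodType R) (b : H -> H -> R)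
  (Tj : Vj -> H) (Ti : Vi -> H) (U : Vj) (W : Vi) : R := b (Tj U) (Ti W).

Definition gamma_const (R : realType) (H V1 V2 : lmodType R) (ip : H -> H -> R)
  (T1 : V1 -> H) (T2 : V2 -> H) : R :=
  sup [set r : R | exists W1 W2, T1 W1 != 0 /\ T2 W2 != 0 /\
         r = ip (T1 W1) (T2 W2) / (l2norm ip (T1 W1) * l2norm ip (T2 W2))].

(* Discretization scheme 2 (zero source), for all n >= 1. *)
Definition scheme2 (R : realType) (H V1 V2 : lmodType R) (ip a : H -> H -> R)
  (T10 T11 : V1 -> H) (T20 T21 : V2 -> H) (tau : R)
  (U1 : nat -> V1) (U2 : nat -> V2) : Prop :=
  let T1 := Tsum T10 T11 in let T2 := Tsum T20 T21 in
  let m11 := bform ip T1 T1 in let m12 := bform ip T2 T1 in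
  let m21 := bform ip T1 T2 in let m22 := bform ip T2 T2 in
  let a11 := bform a T11 T11 in let a12 := bform a T21 T11 in
  let a21 := bform a T11 T21 in let a22 := bform a T21 T21 in
  let c11 := bform a T10 T10 in let c12 := bform a T20 T10 in
  let c21 := bform a T10 T20 in let c22 := bform a T20 T20 in
  forall n : nat, (0 < n)%N ->
    (forall W1 : V1,
       1 / tau ^+ 2 * m11 (U1 n.+1 - U1 n *+ 2 + U1 n.-1) W1
     + 1 / tau ^+ 2 * m12 (U2 n.+1 - U2 n *+ 2 + U2 n.-1) W1
     + 1 / 2 * a11 (U1 n.+1 + U1 n.-1) W1 + a12 (U2 n) W1
     + 1 / 2 * c11 (U1 n.+1 + U1 n.-1) W1 + c12 (U2 n) W1 = 0) /\
    (forall W2 : V2,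
       1 / tau ^+ 2 * m22 (U2 n.+1 - U2 n *+ 2 + U2 n.-1) W2
     + 1 / tau ^+ 2 * m21 (U1 n.+1 - U1 n *+ 2 + U1 n.-1) W2
     + a21 (U1 n) W2 + a22 (U2 n) W2
     + c21 (U1 n) W2 + c22 (U2 n) W2 = 0).

(* Discrete energy E^{n+1/2} of scheme 2 (obtained by testing with
   W_i = U_i^{n+1} - U_i^{n-1}):
     E^{n+1/2} = (1/tau^2) ||T1 D1 + T2 D2||^2
               + 1/2 (||D1||_{a11}^2 + ||D1||_{c11}^2)
               + sum_{i,j} (a_ij + c_ij)(U_j^{n+1}, U_i^n),
   where D_j = U_j^{n+1} - U_j^n. *)
Definition energy2 (R : realType) (H V1 V2 : lmodType R) (ip a : H -> H -> R)
  (T10 T11 : V1 -> H) (T20 T21 : V2 -> H) (tau : R)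
  (U1 : nat -> V1) (U2 : nat -> V2) (n : nat) : R :=
  let T1 := Tsum T10 T11 in let T2 := Tsum T20 T21 in
  let m11 := bform ip T1 T1 in let m12 := bform ip T2 T1 in
  let m21 := bform ip T1 T2 in let m22 := bform ip T2 T2 in
  let a11 := bform a T11 T11 in let a12 := bform a T21 T11 in
  let a21 := bform a T11 T21 in let a22 := bform a T21 T21 in
  let c11 := bform a T10 T10 in let c12 := bform a T20 T10 in
  let c21 := bform a T10 T20 in let c22 := bform a T20 T20 in
  let D1 := U1 n.+1 - U1 n in let D2 := U2 n.+1 - U2 n in
  1 / tau ^+ 2 * (m11 D1 D1 + m12 D2 D1 + m21 D1 D2 + m22 D2 D2)
  + 1 / 2 * (a11 D1 D1 + c11 D1 D1)
  + (a11 (U1 n.+1) (U1 n) + a12 (U2 n.+1) (U1 n)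
     + a21 (U1 n.+1) (U2 n) + a22 (U2 n.+1) (U2 n))
  + (c11 (U1 n.+1) (U1 n) + c12 (U2 n.+1) (U1 n)
     + c21 (U1 n.+1) (U2 n) + c22 (U2 n.+1) (U2 n)).

From HB Require Import structures.
From mathcomp Require Import all_boot all_order all_algebra.
From mathcomp Require Import all_classical all_reals.
From mathcomp Require Import lra.
Import Order.TTheory GRing.Theory Num.Theory.
Set Implicit Arguments. Unset Strict Implicit. Unset Printing Implicit Defensive.
Local Open Scope ring_scope.

(* Testing the first equation of the scheme with U1(n+1) - U1(n-1) and the
   second with U2(n+1) - U2(n-1) turns every term into a telescoping
   difference, which gives the conserved energy.  By polarization, the
   stiffness part of that energy is bounded below by -1/2 (a22 + c22)(D2, D2),
   where D = U(n+1) - U(n), while the strengthened Cauchy-Schwarz inequality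
   |(T1 W1, T2 W2)| <= gamma |T1 W1| |T2 W2| bounds the mass part
   |T1 D1 + T2 D2|^2 / tau^2 below by (1 - gamma^2) |T2 D2|^2 / tau^2.  The CFL
   condition says exactly that the second bound dominates the first. *)

Section SymmetricBilinearForm.
Variables (R : realFieldType) (H : lmodType R) (b : H -> H -> R).
Hypothesis b_sym : forall u v, b u v = b v u.
Hypothesis b_lin : forall (k : R) u v w, b (k *: u + v) w = k * b u w + b v w.

Lemma bilinDl u v w : b (u + v) w = b u w + b v w.
Proof. by have := b_lin 1 u v w; rewrite scale1r mul1r. Qed.

Lemma bilin0l w : b 0 w = 0.
Proof. by apply: (addrI (b 0 w)); rewrite -bilinDl !addr0. Qed.

Lemma bilinNl u w : b (- u) w = - b u w.
Proof.
by have := b_lin (-1) u 0 w; rewrite addr0 bilin0l addr0 scaleN1r mulN1r.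
Qed.

Lemma bilinBl u v w : b (u - v) w = b u w - b v w.
Proof. by rewrite bilinDl bilinNl. Qed.

Lemma bilinDr u v w : b w (u + v) = b w u + b w v.
Proof. by rewrite b_sym bilinDl !(b_sym w). Qed.

Lemma bilinNr u w : b w (- u) = - b w u.
Proof. by rewrite b_sym bilinNl b_sym. Qed.

Lemma bilinBr u v w : b w (u - v) = b w u - b w v.
Proof. by rewrite b_sym bilinBl !(b_sym w). Qed.

Lemma bilinDlr u v u' v' :
  b (u + v) (u' + v') = b u u' + b v u' + b u v' + b v v'.
Proof. by rewrite bilinDl !bilinDr addrACA addrA. Qed.

Lemma bilinDD u v : b (u + v) (u + v) = b u u + 2 * b u v + b v v.
Proof. by rewrite bilinDlr (b_sym v u); lra. Qed.

Lemma bilinBB u v : b (u - v) (u - v) = b u u - 2 * b u v + b v v.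
Proof. by rewrite bilinBl !bilinBr (b_sym v u); lra. Qed.

Lemma bilinBD u v : b (u - v) (u + v) = b u u - b v v.
Proof. by rewrite bilinBl !bilinDr (b_sym v u); lra. Qed.

Lemma bilin_second_difference x y z :
  b (x - y *+ 2 + z) (x - z) = b (x - y) (x - y) - b (y - z) (y - z).
Proof.
have -> : x - y *+ 2 + z = (x - y) - (y - z).
  by rewrite opprB addrACA -opprD -mulr2n addrAC.
have -> : x - z = (x - y) + (y - z) by rewrite addrA subrK.
exact: bilinBD.
Qed.

(* [u] is the component advanced implicitly (averaged over n+1 and n-1),
   [v] the one advanced explicitly. *)
Definition stiffness_energy (u0 v0 u1 v1 : H) : R :=
  1 / 2 * b (u1 - u0) (u1 - u0) + b (u1 + v1) (u0 + v0).

Lemma stiffness_energy_step u0 v0 u1 v1 u2 v2 :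
  1 / 2 * b (u2 + u0) (u2 - u0) + b v1 (u2 - u0)
    + b u1 (v2 - v0) + b v1 (v2 - v0)
  = stiffness_energy u1 v1 u2 v2 - stiffness_energy u0 v0 u1 v1.
Proof.
rewrite /stiffness_energy !(bilinDl, bilinNl, bilinDr, bilinNr).
move: (b_sym u0 u1) (b_sym u0 u2) (b_sym u1 u2).
move: (b_sym u1 v2) (b_sym v1 u2) (b_sym v1 v2); lra.
Qed.

Lemma stiffness_energy_lower_bound (b_ge0 : forall u, 0 <= b u u) u0 v0 u1 v1 :
  - (1 / 2 * b (v1 - v0) (v1 - v0)) <= stiffness_energy u0 v0 u1 v1.
Proof.
have dPQ : u1 + v1 - (u0 + v0) = (u1 - u0) + (v1 - v0) by rewrite opprD addrACA.
have := bilinDD (u1 + v1) (u0 + v0); have := bilinBB (u1 + v1) (u0 + v0).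
have := bilinDD (u1 - u0) (v1 - v0); have := bilinBB (u1 - u0) (v1 - v0).
have := b_ge0 (u1 + v1 + (u0 + v0)); have := b_ge0 (u1 - u0 - (v1 - v0)).
rewrite /stiffness_energy dPQ; lra.
Qed.

End SymmetricBilinearForm.

Lemma second_differenceD (V : zmodType) (x0 x1 x2 y0 y1 y2 : V) :
  x2 + y2 - (x1 + y1) *+ 2 + (x0 + y0)
  = (x2 - x1 *+ 2 + x0) + (y2 - y1 *+ 2 + y0).
Proof.
by rewrite mulrnDl opprD [x2 + y2 + _]addrACA [_ + (x0 + y0)]addrACA.
Qed.

Section TsumLinear.
Variables (R : realType) (H V : lmodType R) (T0 T1 : {linear V -> H}).

Lemma Tsum_is_linear : linear (Tsum T0 T1).
Proof. by move=> k x y; rewrite /Tsum !linearP addrACA scalerDr. Qed.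

HB.instance Definition _ :=
  GRing.isLinear.Build R V H *:%R (Tsum T0 T1) Tsum_is_linear.

End TsumLinear.

Section L2Norm.
Variables (R : realType) (H : lmodType R) (ip : H -> H -> R).
Hypothesis ip_sym : forall u v, ip u v = ip v u.
Hypothesis ip_lin : forall (k : R) u v w, ip (k *: u + v) w = k * ip u w + ip v w.
Hypothesis ip_ge0 : forall u, 0 <= ip u u.
Hypothesis ip_def : forall u, ip u u = 0 -> u = 0.
Local Notation "`| u |_2" := (l2norm ip u) (format "`| u |_2").

Lemma l2norm_sqr u : `|u|_2 ^+ 2 = ip u u.
Proof. exact: sqr_sqrtr. Qed.

Lemma l2norm0 : `|0|_2 = 0.
Proof. by rewrite /l2norm (bilin0l ip_lin) sqrtr0. Qed.

Lemma l2norm_gt0 u : u != 0 -> 0 < `|u|_2.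
Proof.
move=> u_neq0; rewrite sqrtr_gt0 lt_def ip_ge0 andbT.
exact: contra_neq (@ip_def u) u_neq0.
Qed.

Lemma ipDD_ge g u v : - (g * `|u|_2 * `|v|_2) <= ip u v ->
  (1 - g ^+ 2) * ip v v <= ip (u + v) (u + v).
Proof.
move=> uv_ge; rewrite bilinDD // -!l2norm_sqr.
have := sqr_ge0 (`|u|_2 - g * `|v|_2); nra.
Qed.

Lemma gamma_const_ip_ge (V1 V2 : lmodType R)
    (T1 : {additive V1 -> H}) (T2 : V2 -> H) W1 W2 :
  0 < gamma_const ip T1 T2 ->
  - (gamma_const ip T1 T2 * `|T1 W1|_2 * `|T2 W2|_2) <= ip (T1 W1) (T2 W2).
Proof.
rewrite /gamma_const; set S := [set r | _]%classic => sup_gt0.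
have S_sup : has_sup S.
  by apply: contrapT => /sup_out S0; move: sup_gt0; rewrite S0 ltxx.
have [->|u_neq0] := eqVneq (T1 W1) 0.
  by rewrite l2norm0 mulr0 mul0r oppr0 (bilin0l ip_lin).
have [->|v_neq0] := eqVneq (T2 W2) 0.
  by rewrite l2norm0 mulr0 oppr0 ip_sym (bilin0l ip_lin).
have uv_gt0 := mulr_gt0 (l2norm_gt0 u_neq0) (l2norm_gt0 v_neq0).
rewrite -mulrA lerNl -ler_pdivrMr //; apply: sup_upper_bound => //.
exists (- W1), W2; rewrite raddfN oppr_eq0; split=> //; split=> //.
rewrite (bilinNl ip_lin) /l2norm (bilinNl ip_lin) (bilinNr ip_sym ip_lin).
by rewrite opprK mulNr.
Qed.

End L2Norm.

Section Scheme2.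
Variables (R : realType) (H V1 V2 : lmodType R) (ip a : H -> H -> R).
Variables (T10 T11 : {linear V1 -> H}) (T20 T21 : {linear V2 -> H}) (tau : R).
Variables (U1 : nat -> V1) (U2 : nat -> V2).
Hypothesis ip_sym : forall u v, ip u v = ip v u.
Hypothesis ip_lin : forall (k : R) u v w, ip (k *: u + v) w = k * ip u w + ip v w.
Hypothesis a_sym : forall u v, a u v = a v u.
Hypothesis a_lin : forall (k : R) u v w, a (k *: u + v) w = k * a u w + a v w.

Local Notation T1 := (Tsum T10 T11).
Local Notation T2 := (Tsum T20 T21).
Local Notation E := (energy2 ip a T10 T11 T20 T21 tau U1 U2).
Local Notation e n := (T1 (U1 n) + T2 (U2 n)).

Lemma stateB m n : e m - e n = T1 (U1 m - U1 n) + T2 (U2 m - U2 n).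
Proof. by rewrite !raddfB opprD addrACA. Qed.

Lemma state_second_difference n :
  e n.+2 - e n.+1 *+ 2 + e n =
  T1 (U1 n.+2 - U1 n.+1 *+ 2 + U1 n) + T2 (U2 n.+2 - U2 n.+1 *+ 2 + U2 n).
Proof.
rewrite second_differenceD [T1 (_ + U1 n)]raddfD [T2 (_ + U2 n)]raddfD.
by rewrite !raddfB !raddfMn.
Qed.

Lemma energy2E n : E n =
  1 / tau ^+ 2 * ip (e n.+1 - e n) (e n.+1 - e n)
  + stiffness_energy a (T11 (U1 n)) (T21 (U2 n)) (T11 (U1 n.+1)) (T21 (U2 n.+1))
  + stiffness_energy a (T10 (U1 n)) (T20 (U2 n)) (T10 (U1 n.+1)) (T20 (U2 n.+1)).
Proof.
rewrite /stiffness_energy -!(raddfB T11) -!(raddfB T10) stateB.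
rewrite /energy2 /bform -!(bilinDlr ip_sym ip_lin) -!(bilinDlr a_sym a_lin).
lra.
Qed.

Hypothesis scheme : scheme2 ip a T10 T11 T20 T21 tau U1 U2.

Lemma energy2_step n : E n.+1 = E n.
Proof.
have [eq1 eq2] := scheme (ltn0Sn n).
have := eq1 (U1 n.+2 - U1 n); have := eq2 (U2 n.+2 - U2 n).
rewrite [n.+1.-1]/= /bform !(raddfB T11, raddfB T10, raddfB T21, raddfB T20).
rewrite (raddfD T11) (raddfD T10).
have mass := bilin_second_difference ip_sym ip_lin (e n.+2) (e n.+1) (e n).
rewrite state_second_difference stateB (bilinDlr ip_sym ip_lin) in mass.
have stiffA := stiffness_energy_step a_sym a_lin (T11 (U1 n)) (T21 (U2 n))
  (T11 (U1 n.+1)) (T21 (U2 n.+1)) (T11 (U1 n.+2)) (T21 (U2 n.+2)).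
have stiffC := stiffness_energy_step a_sym a_lin (T10 (U1 n)) (T20 (U2 n))
  (T10 (U1 n.+1)) (T20 (U2 n.+1)) (T10 (U1 n.+2)) (T20 (U2 n.+2)).
rewrite !energy2E; move: (congr1 ( *%R (1 / tau ^+ 2)) mass) stiffA stiffC; lra.
Qed.

Hypothesis ip_ge0 : forall u, 0 <= ip u u.
Hypothesis ip_def : forall u, ip u u = 0 -> u = 0.
Hypothesis a_ge0 : forall u, 0 <= a u u.
Hypothesis tau_gt0 : 0 < tau.
Local Notation gamma := (gamma_const ip T1 T2).
Hypothesis gamma_gt0 : 0 < gamma.
Hypothesis cfl : forall W : V2, W != 0 ->
  bform a T21 T21 W W + bform a T20 T20 W W != 0 ->
  tau ^+ 2 <= 2 * (1 - gamma ^+ 2) *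
    (bform ip T2 T2 W W / (bform a T21 T21 W W + bform a T20 T20 W W)).

Lemma cfl_mass_bound D1 D2 :
  1 / 2 * (a (T21 D2) (T21 D2) + a (T20 D2) (T20 D2))
  <= 1 / tau ^+ 2 * ip (T1 D1 + T2 D2) (T1 D1 + T2 D2).
Proof.
have mass_ge : (1 - gamma ^+ 2) * ip (T2 D2) (T2 D2)
              <= ip (T1 D1 + T2 D2) (T1 D1 + T2 D2).
  apply: (ipDD_ge ip_sym ip_lin ip_ge0).
  exact: (gamma_const_ip_ge ip_sym ip_lin ip_ge0 ip_def).
have tau2_gt0 : 0 < tau ^+ 2 by rewrite exprn_gt0.
rewrite !mul1r ler_pdivlMl //.
set K := a (T21 D2) (T21 D2) + a (T20 D2) (T20 D2).
have [K0|K_neq0] := eqVneq K 0.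
  by rewrite K0 mulr0 mulr0 ip_ge0.
have D2_neq0 : D2 != 0.
  apply: contra_neq K_neq0 => D2_0.
  by rewrite /K D2_0 !raddf0 (bilin0l a_lin) addr0.
have K_gt0 : 0 < K by rewrite lt_def K_neq0 addr_ge0.
have := cfl D2_neq0 K_neq0; rewrite mulrA ler_pdivlMr // /bform -/K; lra.
Qed.

Lemma energy2_ge0 n : 0 <= E n.
Proof.
have stiffA := stiffness_energy_lower_bound a_sym a_lin a_ge0
  (T11 (U1 n)) (T21 (U2 n)) (T11 (U1 n.+1)) (T21 (U2 n.+1)).
have stiffC := stiffness_energy_lower_bound a_sym a_lin a_ge0
  (T10 (U1 n)) (T20 (U2 n)) (T10 (U1 n.+1)) (T20 (U2 n.+1)).
rewrite -!raddfB in stiffA stiffC.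
have := cfl_mass_bound (U1 n.+1 - U1 n) (U2 n.+1 - U2 n).
rewrite energy2E stateB; lra.
Qed.

End Scheme2.

Theorem theorem3 (R : realType) (H : lmodType R) (V1 V2 : vectType R)
  (ip a : H -> H -> R)
  (T10 T11 : {linear V1 -> H}) (T20 T21 : {linear V2 -> H}) (tau : R) :
  inner_product ip -> energy_form a -> 0 < tau ->
  let gamma := gamma_const ip (Tsum T10 T11) (Tsum T20 T21) in
  0 < gamma < 1 ->
  (forall W : V2, W != 0 ->
     bform a T21 T21 W W + bform a T20 T20 W W != 0 ->
     tau ^+ 2 <= 2 * (1 - gamma ^+ 2) *
       (bform ip (Tsum T20 T21) (Tsum T20 T21) W W /
        (bform a T21 T21 W W + bform a T20 T20 W W))) ->
  forall (U1 : nat -> V1) (U2 : nat -> V2),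
    scheme2 ip a T10 T11 T20 T21 tau U1 U2 ->
    (forall n : nat, (0 < n)%N ->
       energy2 ip a T10 T11 T20 T21 tau U1 U2 n
       = energy2 ip a T10 T11 T20 T21 tau U1 U2 n.-1) /\
    (forall n : nat, 0 <= energy2 ip a T10 T11 T20 T21 tau U1 U2 n).
Proof.
move=> [ip_sym [ip_lin [ip_ge0 ip_def]]] [a_sym [a_lin a_ge0]] tau_gt0 gamma.
(* [gamma < 1] is what makes the CFL condition satisfiable; the proof does
   not need it. *)
move=> /andP[gamma_gt0 _] cfl U1 U2 scheme.
split=> [[|n] // _|n]; first exact: energy2_step.
exact: energy2_ge0.
Qed.
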